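(* Let $0<a<1$ be a constant and let $k_1\ge k_2\ge\cdots\ge k_n$ and $\ell_1\ge\ell_2\ge\cdots\ge\ell_n$ be non-negative integers such that $\sum_{i=1}^j k_i\le\sum_{i=1}^j\ell_i$ for every $j\le n$ and $\sum_{i=1}^n k_i=\sum_{i=1}^n\ell_i$. Let $X=\sum_{i=1}^n X_i$ and $Y=\sum_{i=1}^n Y_i$, where $X_1,\dots,X_n$ are independent indicator random variables with $\Pr[X_i=1]=a^{k_i}$ and $Y_1,\dots,Y_n$ are independent indicator random variables with $\Pr[Y_i=1]=a^{\ell_i}$. Then for every integer $M$, $\Pr[X\ge M]\le\Pr[Y\ge M]$. *)

From HB Require Import structures.
From mathcomp Require Import all_boot all_order all_algebra.
Set Implicit Arguments. Unset Strict Implicit. Unset Printing Implicit Defensive.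
Import Order.TTheory GRing.Theory Num.Theory.
Local Open Scope ring_scope.

(* For independent indicator variables Z_0,...,Z_{n-1} with Pr[Z_i = 1] = p i,
   the probability Pr[Z_0 + ... + Z_{n-1} >= M], computed on the product
   probability space {0,1}^n: an outcome is the set S of indices i with Z_i = 1,
   of probability prod_{i in S} p i * prod_{i notin S} (1 - p i). *)
Definition indep_indicator_sum_ge (R : numDomainType) (n : nat)
    (p : nat -> R) (M : int) : R :=
  \sum_(S : {set 'I_n} | M <= (#|S| : int))
     \prod_(i < n) (if i \in S then p i else 1 - p i).

(* Moving one unit of exponent from a larger k_i to a smaller k_j keeps the product
   p_i p_j = a^(k_i + k_j) fixed and decreases p_i + p_j, as a^x is convex in x.
   Conditioning on the two coordinates, Pr[X >= M] is affine in p_i + p_j for fixed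
   p_i p_j, with slope Pr[rest >= M - 1] - Pr[rest >= M] >= 0, so such a move can
   only decrease the tail. Starting from l, moving units towards k one at a time
   reaches k, the weighted sum \sum_t l_t (n - t) decreasing at each step. *)

From HB Require Import structures.
From mathcomp Require Import all_boot all_order all_algebra.
From mathcomp Require Import perm ring zify.
Import Order.TTheory GRing.Theory Num.Theory.

Set Implicit Arguments.
Unset Strict Implicit.
Unset Printing Implicit Defensive.

Definition move_unit (e : nat -> nat) (i j : nat) (t : nat) : nat :=
  if t == i then (e i).-1 else if t == j then (e j).+1 else e t.

Definition prefix_dominated (n : nat) (k l : nat -> nat) : Prop :=
  forall m, m <= n -> \sum_(t < m) k t <= \sum_(t < m) l t.

Lemma sum_indicator_eq (w : nat -> nat) (i m : nat) :
  \sum_(t < m) ((t : nat) == i) * w t = (i < m) * w i.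
Proof.
case: (ltnP i m) => [im | mi]; last first.
  by rewrite mul0n big1 // => t _; rewrite ltn_eqF // (leq_trans (ltn_ord t)).
rewrite (bigD1 (Ordinal im)) //= eqxx !mul1n big1 ?addn0 // => t.
by rewrite -val_eqE /= => /negbTE ->.
Qed.

Lemma sum_move_unit (w e : nat -> nat) (i j m : nat) : i != j -> 0 < e i ->
  \sum_(t < m) move_unit e i j t * w t + (i < m) * w i
  = \sum_(t < m) e t * w t + (j < m) * w j.
Proof.
move=> ij ei_gt0; rewrite -!sum_indicator_eq -!big_split /=.
apply: eq_bigr => t _; rewrite -!mulnDl /move_unit.
case: (eqVneq (t : nat) i) => [->|ti]; first by rewrite (negbTE ij) addn0 addn1 prednK.
by case: (eqVneq (t : nat) j) => [->|tj]; rewrite ?addn0 ?addn1.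
Qed.

Lemma sum_move_unit1 (e : nat -> nat) (i j m : nat) : i != j -> 0 < e i ->
  \sum_(t < m) move_unit e i j t + (i < m) = \sum_(t < m) e t + (j < m).
Proof.
move=> ij ei_gt0; have := sum_move_unit (fun=> 1) m ij ei_gt0.
rewrite !muln1; under eq_bigr do rewrite muln1.
by under [in X in _ = X -> _]eq_bigr do rewrite muln1.
Qed.

Section UnitMoves.
Variables (n : nat) (k : nat -> nat).

Lemma surplus_before_deficit (l : nat -> nat) :
  prefix_dominated n k l -> \sum_(t < n) k t = \sum_(t < n) l t ->
  (exists t, (t < n) && (l t != k t)) ->
  exists i j, [/\ i < j < n, k i < l i, l j < k j &
    forall m, i < m <= j -> \sum_(t < m) k t < \sum_(t < m) l t].
Proof.
move=> dom tot /ex_minnP[i /andP[i_n lki] min_i].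
have eq_upto_i : \sum_(t < i) l t = \sum_(t < i) k t.
  apply: eq_bigr => t _; apply/eqP/contraT => ne.
  have := min_i t; rewrite ne (ltn_trans (ltn_ord t) i_n) => /(_ isT).
  by rewrite leqNgt ltn_ord.
have lt_i : k i < l i.
  rewrite ltn_neqAle eq_sym lki /=.
  by have := dom i.+1 i_n; rewrite !big_ord_recr /= eq_upto_i leq_add2l.
have : exists m, [&& i < m, m <= n & \sum_(t < m) l t == \sum_(t < m) k t].
  by exists n; rewrite i_n leqnn tot eqxx.
case/ex_minnP=> -[|j] /and3P[// i_j j_n /eqP eq_j] min_j.
have lt_between m : i < m <= j -> \sum_(t < m) k t < \sum_(t < m) l t.
  move=> /andP[im mj]; have := dom m (leq_trans mj (ltnW j_n)).
  rewrite leq_eqVlt => /orP[/eqP eq_m|//].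
  by have := min_j m; rewrite im (leq_trans mj (ltnW j_n)) eq_m eqxx /= => /(_ isT); lia.
have i_lt_j : i < j.
  rewrite ltn_neqAle -ltnS i_j andbT; apply/eqP => ij; move: eq_j.
  by rewrite -ij !big_ord_recr /= eq_upto_i => /addnI; lia.
exists i, j; split=> //; first by rewrite i_lt_j.
have := lt_between j; rewrite i_lt_j leqnn => /(_ isT).
move: eq_j; rewrite !big_ord_recr /=.
set L := \sum_(t < j) l t; set K := \sum_(t < j) k t; lia.
Qed.

Lemma prefix_dominated_move_unit (l : nat -> nat) (i j : nat) :
  prefix_dominated n k l -> i < j -> 0 < l i ->
  (forall m, i < m <= j -> \sum_(t < m) k t < \sum_(t < m) l t) ->
  prefix_dominated n k (move_unit l i j).
Proof.
move=> dom ij li_gt0 lt_between m mn.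
have := sum_move_unit1 m (negbT (ltn_eqF ij)) li_gt0; have := dom m mn.
case: (leqP m i) => mi; last have := lt_between m; case: (leqP m j) => mj; lia.
Qed.

Lemma sum_move_unit_eq (l : nat -> nat) (i j : nat) :
  i < n -> j < n -> i != j -> 0 < l i ->
  \sum_(t < n) move_unit l i j t = \sum_(t < n) l t.
Proof.
move=> i_n j_n ij li_gt0.
by have := sum_move_unit1 n ij li_gt0; rewrite i_n j_n; lia.
Qed.

Lemma weighted_sum_move_unit_lt (l : nat -> nat) (i j : nat) :
  i < j -> j < n -> 0 < l i ->
  \sum_(t < n) move_unit l i j t * (n - t) < \sum_(t < n) l t * (n - t).
Proof.
move=> ij j_n li_gt0.
have := sum_move_unit (fun t => n - t) n (negbT (ltn_eqF ij)) li_gt0.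
by rewrite (ltn_trans ij j_n) j_n !mul1n; lia.
Qed.

End UnitMoves.

Local Open Scope ring_scope.

Section TwoCoordinates.
Variables (R : realFieldType) (n : nat) (M : int) (i j : 'I_n).
Hypothesis neq_ij : i != j.

Definition coord_prob (p : nat -> R) (S : {set 'I_n}) (t : 'I_n) : R :=
  if t \in S then p t else 1 - p t.

Definition rest_prob (p : nat -> R) (S : {set 'I_n}) : R :=
  \prod_(t | (t != i) && (t != j)) coord_prob p S t.

Definition cond_tail (p : nat -> R) (bi bj : bool) : R :=
  \sum_(S : {set 'I_n} | [&& M <= (#|S| : int), (i \in S) == bi & (j \in S) == bj])
     rest_prob p S.

Lemma rest_prob_ge0 (p : nat -> R) S :
  (forall t : 'I_n, 0 <= p t <= 1) -> 0 <= rest_prob p S.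
Proof.
move=> p01; apply: prodr_ge0 => t _; have /andP[p0 p1] := p01 t.
by rewrite /coord_prob; case: ifP; rewrite ?subr_ge0.
Qed.

Lemma eq_rest_prob (p p' : nat -> R) S :
  (forall t : 'I_n, t != i -> t != j -> p t = p' t) ->
  rest_prob p S = rest_prob p' S.
Proof. by move=> eqp; apply: eq_bigr => t /andP[ti tj]; rewrite /coord_prob !eqp. Qed.

Lemma indep_indicator_sum_ge_split (p : nat -> R) :
  indep_indicator_sum_ge n p M =
    p i * p j * cond_tail p true true + p i * (1 - p j) * cond_tail p true false
  + (1 - p i) * p j * cond_tail p false true
  + (1 - p i) * (1 - p j) * cond_tail p false false.
Proof.
have split_prod (S : {set 'I_n}) : \prod_(t < n) (if t \in S then p t else 1 - p t)
    = coord_prob p S i * coord_prob p S j * rest_prob p S.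
  by rewrite (bigD1 i) //= (bigD1 j) 1?eq_sym //= mulrA.
rewrite /indep_indicator_sum_ge (eq_bigr _ (fun S _ => split_prod S)).
rewrite (bigID (fun S : {set 'I_n} => i \in S)) /=.
rewrite (bigID (fun S : {set 'I_n} => j \in S)) /=.
rewrite [X in _ + X](bigID (fun S : {set 'I_n} => j \in S)) /= -!addrA.
rewrite /cond_tail !big_distrr /=.
by congr (_ + (_ + (_ + _))); apply: eq_big => S;
  rewrite /coord_prob; case: (i \in S); case: (j \in S); rewrite ?andbT ?andbF.
Qed.

Definition toggle (S : {set 'I_n}) : {set 'I_n} :=
  if i \in S then S :\ i else i |: S.

Lemma toggleK : involutive toggle.
Proof.
move=> S; rewrite /toggle; case iS: (i \in S).
  by rewrite !inE eqxx /= setD1K.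
by rewrite setU11 setU1K // iS.
Qed.

Lemma cond_tail_swap (p : nat -> R) : cond_tail p false true = cond_tail p true false.
Proof.
have inj_pre : injective (fun S : {set 'I_n} => tperm i j @^-1: S).
  by move=> A B /setP eqAB; apply/setP => x; have := eqAB (tperm i j x); rewrite !inE tpermK.
rewrite /cond_tail (reindex_inj inj_pre); apply: eq_big => S.
  rewrite !inE tpermL tpermR card_preimset; last exact: perm_inj.
  by case: (i \in S); case: (j \in S); rewrite ?andbT ?andbF.
move=> _; apply: eq_bigr => t /andP[ti tj].
by rewrite /coord_prob inE tpermD // eq_sym.
Qed.

Lemma cond_tail_le_add (p : nat -> R) :
  (forall t : 'I_n, 0 <= p t <= 1) -> cond_tail p false false <= cond_tail p true false.
Proof.
move=> p01; rewrite [leRHS](reindex_inj (inv_inj toggleK)) /cond_tail.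
rewrite [leRHS]big_mkcond [leLHS]big_mkcond /=; apply: ler_sum => S _.
case: ifP => [/and3P[leM /eqP iS /eqP jS]|_]; last by case: ifP => // _; exact: rest_prob_ge0.
have -> : rest_prob p (toggle S) = rest_prob p S.
  apply: eq_bigr => t /andP[ti tj].
  by rewrite /coord_prob /toggle; case: (i \in S); rewrite !inE (negbTE ti).
rewrite /toggle iS !inE eqxx jS orbF [j == i]eq_sym (negbTE neq_ij).
by rewrite cardsU1 iS (le_trans leM) // lez_nat leqnSn.
Qed.

Lemma indep_indicator_sum_ge_pair (p : nat -> R) :
  indep_indicator_sum_ge n p M =
    p i * p j * (cond_tail p true true - cond_tail p true false *+ 2
                 + cond_tail p false false)
  + (p i + p j) * (cond_tail p true false - cond_tail p false false)
  + cond_tail p false false.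
Proof. by rewrite indep_indicator_sum_ge_split cond_tail_swap; ring. Qed.

Lemma indep_indicator_sum_ge_pair_le (p p' : nat -> R) :
  (forall t : 'I_n, t != i -> t != j -> p' t = p t) ->
  (forall t : 'I_n, 0 <= p t <= 1) ->
  p' i * p' j = p i * p j -> p' i + p' j <= p i + p j ->
  indep_indicator_sum_ge n p' M <= indep_indicator_sum_ge n p M.
Proof.
move=> eq_out p01 eq_prod le_sum.
have eq_tail bi bj : cond_tail p' bi bj = cond_tail p bi bj.
  by apply: eq_bigr => S _; apply: eq_rest_prob.
rewrite !indep_indicator_sum_ge_pair !eq_tail eq_prod lerD2r lerD2l.
by rewrite ler_wpM2r // subr_ge0 cond_tail_le_add.
Qed.

End TwoCoordinates.

Lemma eq_indep_indicator_sum_ge (R : numDomainType) (n : nat) (p q : nat -> R) (M : int) :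
  (forall t, (t < n)%N -> p t = q t) ->
  indep_indicator_sum_ge n p M = indep_indicator_sum_ge n q M.
Proof. by move=> eq_pq; apply: eq_bigr => S _; apply: eq_bigr => t _; rewrite !eq_pq. Qed.

Lemma expr_spread_le (R : numDomainType) (a : R) (u v : nat) :
  0 <= a <= 1 -> (u <= v)%N -> a ^+ v + a ^+ u.+1 <= a ^+ v.+1 + a ^+ u.
Proof.
move=> /andP[a0 a1] uv.
rewrite -subr_ge0 (_ : _ - _ = (a ^+ u - a ^+ v) * (1 - a)); last by rewrite !exprS; ring.
by apply: mulr_ge0; rewrite subr_ge0 // ler_wiXn2l ?a0.
Qed.

Section PowerTails.
Variables (R : realFieldType) (a : R) (n : nat) (M : int).
Hypothesis a01 : 0 <= a <= 1.

Lemma tail_move_unit_le (e : nat -> nat) (i j : nat) :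
  (i < n)%N -> (j < n)%N -> i != j -> (e j < e i)%N ->
  indep_indicator_sum_ge n (fun t => a ^+ move_unit e i j t) M
  <= indep_indicator_sum_ge n (fun t => a ^+ e t) M.
Proof.
move=> i_n j_n ij lt_ji; have ij_ord : Ordinal i_n != Ordinal j_n by [].
have [a0 a1] := andP a01.
apply: (@indep_indicator_sum_ge_pair_le R n M _ _ ij_ord) => [t ti tj | t | |] /=.
- by rewrite /move_unit !ifN.
- by rewrite exprn_ge0 ?exprn_ile1.
- by rewrite /move_unit eqxx [j == i]eq_sym (negbTE ij) eqxx -!exprD; congr (_ ^+ _); lia.
rewrite /move_unit eqxx [j == i]eq_sym (negbTE ij) eqxx.
have -> : a ^+ e i = a ^+ (e i).-1.+1 by rewrite prednK //; lia.
by apply: expr_spread_le => //; lia.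
Qed.

Lemma indep_indicator_sum_ge_dominated (k : nat -> nat) :
  (forall i j, (i <= j)%N -> (j < n)%N -> (k j <= k i)%N) ->
  forall l : nat -> nat, prefix_dominated n k l ->
  (\sum_(t < n) k t = \sum_(t < n) l t)%N ->
  indep_indicator_sum_ge n (fun t => a ^+ k t) M
  <= indep_indicator_sum_ge n (fun t => a ^+ l t) M.
Proof.
move=> k_noninc l; have [N] := ubnP (\sum_(t < n) l t * (n - t))%N.
elim: N l => // N IH l potential dom tot.
have [/existsP[t lkt] | same] := boolP [exists t : 'I_n, l t != k t]; last first.
  rewrite (@eq_indep_indicator_sum_ge _ _ _ (fun t => a ^+ l t)) // => t t_n.
  by move/existsPn/(_ (Ordinal t_n))/negPn/eqP: same => ->.
have [|i [j [/andP[ij j_n] lt_i lt_j lt_between]]] := surplus_before_deficit dom tot.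
  by exists t; rewrite ltn_ord.
have li_gt0 : (0 < l i)%N by lia.
have le_kji := k_noninc i j (ltnW ij) j_n.
have [i_n neq_ij] := (ltn_trans ij j_n, negbT (ltn_eqF ij)).
apply: le_trans (IH (move_unit l i j) _ _ _) (tail_move_unit_le i_n j_n neq_ij _).
- by have := weighted_sum_move_unit_lt ij j_n li_gt0; lia.
- exact: prefix_dominated_move_unit.
- by rewrite sum_move_unit_eq.
- lia.
Qed.

End PowerTails.

Theorem mainTheorem4 (R : realFieldType) (a : R) (n : nat) (k l : nat -> nat)
    (ha0 : 0 < a) (ha1 : a < 1)
    (hk : forall i j : nat, (i <= j)%N -> (j < n)%N -> (k j <= k i)%N)
    (hl : forall i j : nat, (i <= j)%N -> (j < n)%N -> (l j <= l i)%N)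
    (hmaj : forall j : nat, (j <= n)%N ->
       (\sum_(i < j) k i <= \sum_(i < j) l i)%N)
    (hsum : (\sum_(i < n) k i)%N = (\sum_(i < n) l i)%N)
    (M : int) :
  indep_indicator_sum_ge n (fun i => a ^+ k i) M
  <= indep_indicator_sum_ge n (fun i => a ^+ l i) M.
Proof.
have a01 : 0 <= a <= 1 by rewrite !ltW.
exact: indep_indicator_sum_ge_dominated a01 k hk l hmaj hsum.
Qed.
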